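(* Let $A\in\mathbb{R}^{n\times m}$ with $n<m$ have nonzero columns $\alpha_1,\dots,\alpha_m$, let $C=A^TA$ with entries $c_{ij}=\langle\alpha_i,\alpha_j\rangle$, and for each $i\in[m]$ define $\nu(i)=\max_{j\neq i}\frac{|c_{ij}|}{c_{ii}}$ and $\rho(i)=\frac{\nu(i)}{\nu(i)+1}$. Let $x\in\mathbb{R}^m$ have support $\mathcal{S}\subseteq[m]$ and put $\rho(\mathcal{S})=\sum_{i\in\mathcal{S}}\rho(i)$. If $\rho(\mathcal{S})<\frac12$, then $x$ is the unique minimizer of $\min_{z\in\mathbb{R}^m}\|z\|_1$ subject to $Az=Ax$ (i.e., every $\ell_1$ minimizer $\hat{x}$ of this problem equals $x$).
   Context: $[m]=\{1,\dots,m\}$. The support of $x$ is the set of indices $i$ with $x_i\neq 0$. The maximum in $\nu(i)$ is over $j\in[m]$, $j\neq i$. *)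

From mathcomp Require Import all_boot all_order all_algebra.
Set Implicit Arguments. Unset Strict Implicit. Unset Printing Implicit Defensive.
Import Order.TTheory GRing.Theory Num.Theory.
Local Open Scope ring_scope.

Definition gram (R : realFieldType) n m (A : 'M[R]_(n, m)) : 'M[R]_m := A^T *m A.

(* nu(i) = max_{j <> i} |c_ij| / c_ii  (all terms are >= 0, so 0 is a neutral start) *)
Definition nu (R : realFieldType) n m (A : 'M[R]_(n, m)) (i : 'I_m) : R :=
  \big[Num.max/0]_(j < m | j != i) (`|gram A i j| / gram A i i).

Definition rho (R : realFieldType) n m (A : 'M[R]_(n, m)) (i : 'I_m) : R :=
  nu A i / (nu A i + 1).

Definition supp (R : realFieldType) m (x : 'cV[R]_m) : {set 'I_m} :=
  [set i | x i 0 != 0].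

Definition rhoS (R : realFieldType) n m (A : 'M[R]_(n, m)) (S : {set 'I_m}) : R :=
  \sum_(i in S) rho A i.

Definition l1norm (R : realFieldType) m (z : 'cV[R]_m) : R := \sum_i `|z i 0|.

Definition l1_minimizer (R : realFieldType) n m (A : 'M[R]_(n, m)) (b : 'cV[R]_n)
  (z : 'cV[R]_m) : Prop :=
  A *m z = b /\ forall w : 'cV[R]_m, A *m w = b -> l1norm z <= l1norm w.

From mathcomp Require Import all_boot all_order all_algebra.
From mathcomp Require Import reals.
From mathcomp Require Import lra.
Import Order.TTheory GRing.Theory Num.Theory.
Local Open Scope ring_scope.

(* For h in the kernel of A, row i of (A^T A) h = 0 gives
   c_ii |h_i| <= sum_(j <> i) |c_ij| |h_j| <= c_ii nu(i) (|h|_1 - |h_i|),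
   i.e. |h_i| <= rho(i) |h|_1.  Summing over the support S of x yields the
   null space property  sum_(i in S) |h_i| <= rho(S) |h|_1 < |h|_1 / 2,
   and then |x + h|_1 >= |x|_1 + (1 - 2 rho(S)) |h|_1 for every kernel vector h. *)

Section Coherence.
Set Implicit Arguments.
Unset Strict Implicit.
Variables (R : realFieldType) (n m : nat) (A : 'M[R]_(n, m)).

Lemma gram_diag_gt0 i : col i A != 0 -> 0 < gram A i i.
Proof.
move=> Ai_neq0; rewrite /gram !mxE.
have -> : \sum_j A^T i j * A j i = \sum_j A j i ^+ 2.
  by apply: eq_bigr => j _; rewrite mxE expr2.
rewrite lt_def sumr_ge0 ?andbT => [|j _]; last exact: sqr_ge0.
rewrite psumr_eq0 => [|j _]; last exact: sqr_ge0.
apply: contra Ai_neq0 => /allP Ai0; apply/eqP/matrixP => j k.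
by rewrite !mxE; have /implyP/(_ isT) := Ai0 j (mem_index_enum j); rewrite sqrf_eq0 => /eqP.
Qed.

Lemma nu_ge0 i : 0 <= nu A i.
Proof. exact: bigmax_ge_id. Qed.

Lemma l1norm_ge0 (z : 'cV[R]_m) : 0 <= l1norm z.
Proof. by apply: sumr_ge0 => i _. Qed.

Lemma l1norm_eq0 (z : 'cV[R]_m) : l1norm z = 0 -> z = 0.
Proof.
move/eqP; rewrite psumr_eq0 // => /allP z0; apply/matrixP => i j.
have /implyP/(_ isT) := z0 i (mem_index_enum i).
by rewrite ord1 normr_eq0 mxE => /eqP.
Qed.

Lemma l1norm_coord_split (z : 'cV[R]_m) i :
  \sum_(j | j != i) `|z j 0| = l1norm z - `|z i 0|.
Proof. by rewrite /l1norm [X in _ = X - _](bigD1 i) //= addrC addrK. Qed.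

Lemma kernel_gram_row_bound (h : 'cV[R]_m) i : A *m h = 0 ->
  gram A i i * `|h i 0| <= \sum_(j | j != i) `|gram A i j| * `|h j 0|.
Proof.
move=> Ah0; have : (gram A *m h) i 0 = 0 by rewrite /gram -mulmxA Ah0 mulmx0 mxE.
rewrite mxE (bigD1 i) //= => /eqP; rewrite addr_eq0 => /eqP Ch_ii.
apply: (@le_trans _ _ `|gram A i i * h i 0|); first by rewrite normrM ler_wpM2r ?ler_norm.
rewrite Ch_ii normrN; apply: le_trans (ler_norm_sum _ _ _) _.
by apply: ler_sum => j _; rewrite normrM.
Qed.

Lemma kernel_coord_le_rho (h : 'cV[R]_m) i : col i A != 0 -> A *m h = 0 ->
  `|h i 0| <= rho A i * l1norm h.
Proof.
move=> Ai_neq0 Ah0; have c_gt0 := gram_diag_gt0 Ai_neq0; have nu0 := nu_ge0 i.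
have c_offdiag j : j != i -> `|gram A i j| <= gram A i i * nu A i.
  move=> ji; rewrite mulrC -ler_pdivrMr //; exact: le_bigmax_cond.
have : gram A i i * `|h i 0| <= gram A i i * (nu A i * (l1norm h - `|h i 0|)).
  apply: le_trans (kernel_gram_row_bound i Ah0) _.
  rewrite -l1norm_coord_split !mulr_sumr; apply: ler_sum => j ji.
  by rewrite mulrA ler_wpM2r // c_offdiag.
rewrite ler_pM2l // /rho mulrAC ler_pdivlMr ?ltr_wpDl //; lra.
Qed.

Lemma null_space_property (S : {set 'I_m}) (h : 'cV[R]_m) :
  {in S, forall i, col i A != 0} -> A *m h = 0 ->
  \sum_(i in S) `|h i 0| <= rhoS A S * l1norm h.
Proof.
move=> AS_neq0 Ah0; rewrite /rhoS mulr_suml; apply: ler_sum => i iS.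
exact: kernel_coord_le_rho (AS_neq0 i iS) Ah0.
Qed.

End Coherence.

Lemma l1norm_add_ge {R : realFieldType} {m} (x h : 'cV[R]_m) :
  l1norm x + l1norm h - 2 * \sum_(i in supp x) `|h i 0| <= l1norm (x + h).
Proof.
have coord i : `|x i 0| + `|h i 0| - 2 * (if i \in supp x then `|h i 0| else 0)
                 <= `|(x + h) i 0|.
  rewrite mxE inE; case: eqP => [->|_] /=; first by rewrite normr0 !add0r mulr0 subr0.
  have := ler_normD (x i 0 + h i 0) (- h i 0); rewrite addrK normrN; lra.
apply: le_trans (ler_sum _ (fun i _ => coord i)).
by rewrite sumrB big_split -mulr_sumr -big_mkcond.
Qed.

Lemma l1norm_kernel_growth (R : realFieldType) n m (A : 'M[R]_(n, m)) (x w : 'cV[R]_m) :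
  {in supp x, forall i, col i A != 0} -> A *m w = A *m x ->
  l1norm x + (1 - 2 * rhoS A (supp x)) * l1norm (w - x) <= l1norm w.
Proof.
move=> Asupp_neq0 Awx.
have /(null_space_property Asupp_neq0) nsp : A *m (w - x) = 0.
  by rewrite mulmxBr Awx subrr.
have := l1norm_add_ge x (w - x); rewrite [x + _]addrC subrK; lra.
Qed.

Theorem theorem1 (R : realType) (n m : nat) (A : 'M[R]_(n, m)) (x : 'cV[R]_m) :
  (n < m)%N ->
  (forall i : 'I_m, col i A != 0) ->
  rhoS A (supp x) < 1 / 2 ->
  l1_minimizer A (A *m x) x /\
  (forall xh : 'cV[R]_m, l1_minimizer A (A *m x) xh -> xh = x).
Proof.
(* The hypothesis n < m only makes the statement non-vacuous. *)
move=> _ A_neq0 rho_lt.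
have gap_gt0 : 0 < 1 - 2 * rhoS A (supp x) by lra.
have growth w := @l1norm_kernel_growth R n m A x w (in1W A_neq0).
split=> [|xh [Axh xh_min]].
  split=> // w /growth; apply: le_trans.
  by rewrite lerDl mulr_ge0 ?l1norm_ge0 ?ltW.
have h0 : l1norm (xh - x) = 0.
  have : (1 - 2 * rhoS A (supp x)) * l1norm (xh - x) == 0.
    apply/eqP/le_anti/andP; split; last by rewrite mulr_ge0 ?l1norm_ge0 ?ltW.
    rewrite -(lerD2l (l1norm x)) addr0.
    exact: le_trans (growth xh Axh) (xh_min x erefl).
  by rewrite mulf_eq0 (gt_eqF gap_gt0) => /eqP.
exact/subr0_eq/l1norm_eq0.
Qed.
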